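(* If a hyperideal $I$ of $R$ is 1-absorbing prime but not prime, then $R$ is a local multiplicative hyperring.
   Context: Throughout, $R$ is a commutative multiplicative hyperring: $(R,+)$ is an abelian group and $\circ:R\times R\to P^*(R)$ is a commutative, associative hyperoperation with $a\circ(b+c)\subseteq a\circ b+a\circ c$ and $a\circ(-b)=(-a)\circ b=-(a\circ b)$; $A\circ B=\bigcup_{a\in A,b\in B}a\circ b$. $R$ has an identity $1$ ($a\in a\circ1$); $x$ is a unit if $1\in x\circ y$ for some $y$. Hyperideals are nonempty subsets closed under subtraction and absorbing $r\circ a\subseteq I$; all are assumed $\mathbf{C}$-hyperideals (for every finite product $A=r_1\circ\cdots\circ r_n$, $A\cap I\ne\emptyset$ implies $A\subseteq I$). Prime hyperideal: proper $P$ with $x\circ y\subseteq P\Rightarrow x\in P$ or $y\in P$. 1-absorbing prime hyperideal: proper $I$ such that for all nonunit $x,y,z$, $x\circ y\circ z\subseteq I$ implies $x\circ y\subseteq I$ or $z\in I$. $R$ is local if it has a unique maximal hyperideal. *)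

(* the additive group (R,+) is a zmodType; the hyperoperation
   is a relation  hmul a b x  meaning  x \in a o b. Subsets are predicates R -> Prop. *)
From mathcomp Require Import all_boot all_algebra.
Set Implicit Arguments. Unset Strict Implicit. Unset Printing Implicit Defensive.
Import GRing.Theory.
Local Open Scope ring_scope.

Section Hyper.
Variable R : zmodType.
Variable hmul : R -> R -> R -> Prop.

Definition sub_set (A B : R -> Prop) : Prop := forall x, A x -> B x.
Definition eq_set (A B : R -> Prop) : Prop := forall x, A x <-> B x.
Definition single (a : R) : R -> Prop := fun x => x = a.

Definition setmul (A B : R -> Prop) : R -> Prop :=
  fun x => exists a b, A a /\ B b /\ hmul a b x.

Definition setadd (A B : R -> Prop) : R -> Prop :=
  fun x => exists a b, A a /\ B b /\ x = a + b.
Definition setopp (A : R -> Prop) : R -> Prop := fun x => A (- x).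

Definition is_comm_mhyperring (one : R) : Prop :=
  [/\ (forall a b, exists x, hmul a b x),
      (forall a b, eq_set (hmul a b) (hmul b a)),
      ((forall a b c, eq_set (setmul (hmul a b) (single c))
                            (setmul (single a) (hmul b c))) /\
      (forall a b c, sub_set (hmul a (b + c)) (setadd (hmul a b) (hmul a c)))),
      (forall a b, eq_set (hmul a (- b)) (hmul (- a) b)
                   /\ eq_set (hmul a (- b)) (setopp (hmul a b)))
    & (forall a, hmul a one a)].

Definition hunit (one x : R) : Prop := exists y, hmul x y one.

Definition hprod (r : R) (rs : seq R) : R -> Prop :=
  foldl (fun A x => setmul A (single x)) (single r) rs.

Definition C_condition (I : R -> Prop) : Prop :=
  forall r rs, (exists x, hprod r rs x /\ I x) -> sub_set (hprod r rs) I.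

(* hyperideal (all hyperideals are assumed to be C-hyperideals) *)
Definition hyperideal (I : R -> Prop) : Prop :=
  [/\ (exists x, I x),
      (forall a b, I a -> I b -> I (a - b)),
      (forall r a, I a -> sub_set (hmul r a) I)
    & C_condition I].

Definition proper (I : R -> Prop) : Prop := exists x, ~ I x.

Definition prime_hyperideal (P : R -> Prop) : Prop :=
  [/\ hyperideal P, proper P &
      forall x y, sub_set (hmul x y) P -> P x \/ P y].

Definition one_absorbing_prime (one : R) (I : R -> Prop) : Prop :=
  [/\ hyperideal I, proper I &
      forall x y z, ~ hunit one x -> ~ hunit one y -> ~ hunit one z ->
        sub_set (setmul (hmul x y) (single z)) I ->
        sub_set (hmul x y) I \/ I z].

Definition maximal_hyperideal (M : R -> Prop) : Prop :=
  [/\ hyperideal M, proper M &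
      forall J, hyperideal J -> sub_set M J -> eq_set J M \/ eq_set J (fun _ => True)].

Definition local_hyperring : Prop :=
  exists M, maximal_hyperideal M /\ forall N, maximal_hyperideal N -> eq_set N M.

End Hyper.

From mathcomp Require Import all_boot all_algebra.
From Stdlib Require Import Classical.
Set Implicit Arguments. Unset Strict Implicit. Unset Printing Implicit Defensive.
Import GRing.Theory.
Local Open Scope ring_scope.

(* Since I is not prime there are x, y outside I with x o y in I; both
   are nonunits (a unit factor could be cancelled).  For every nonunit a the
   triple product a o x o y lies in I, so 1-absorption gives a o x in I.  This
   "annihilation" of x by all nonunits is enough to show that the set of
   nonunits is closed under subtraction and satisfies the C-condition (if some
   nonunit t lies in a product r o r_1 o ... o r_n, then that product times x
   meets I, hence lies in I, and a unit in the product would put x in I).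
   The set of nonunits is then a hyperideal, and, as every proper hyperideal
   consists of nonunits, it is the unique maximal hyperideal. *)

Section Hyperring.
Variables (R : zmodType) (hmul : R -> R -> R -> Prop) (one : R).

Local Notation is_unit := (hunit hmul one).

Definition nonunits : R -> Prop := fun t => ~ is_unit t.

Hypothesis hmulC : forall a b, eq_set (hmul a b) (hmul b a).
Hypothesis hmulA : forall a b c,
  eq_set (setmul hmul (hmul a b) (single c)) (setmul hmul (single a) (hmul b c)).
Hypothesis hmul1 : forall a, hmul a one a.

Lemma hmul_reassoc a b c t :
  setmul hmul (hmul a b) (single c) t -> exists w, hmul b c w /\ hmul a w t.
Proof.
move=> /hmulA [a' [w [-> [bcw awt]]]].
by exists w.
Qed.

Lemma absorbs_by_unit (J : R -> Prop) :
  (forall r a, J a -> sub_set (hmul r a) J) ->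
  forall u z, is_unit u -> sub_set (hmul u z) J -> J z.
Proof.
move=> J_abs u z [u' u'u1] uzJ.
have z_in : setmul hmul (hmul u' u) (single z) z.
  by exists one, z; split; [apply/hmulC | split; [|apply/hmulC; apply: hmul1]].
have [w [uzw u'wz]] := hmul_reassoc z_in.
exact: J_abs u' w (uzJ w uzw) z u'wz.
Qed.

Lemma unit_factor_l a b t : hmul a b t -> is_unit t -> is_unit a.
Proof.
move=> abt [v tv1].
have one_in : setmul hmul (hmul a b) (single v) one by exists t, v.
have [w [_ aw1]] := hmul_reassoc one_in.
by exists w.
Qed.

Lemma unit_factor_r a b t : hmul a b t -> is_unit t -> is_unit b.
Proof. by move=> /hmulC; apply: unit_factor_l. Qed.

Lemma hyperideal_unit_full (J : R -> Prop) u :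
  hyperideal hmul J -> J u -> is_unit u -> forall z, J z.
Proof.
move=> [_ _ J_abs _] Ju [u' uu'1] z.
have J1 : J one by apply: (J_abs u' u Ju); apply/hmulC.
exact: (J_abs z one J1 z (hmul1 z)).
Qed.

Lemma proper_hyperideal_nonunits (N : R -> Prop) :
  hyperideal hmul N -> proper N -> sub_set N nonunits.
Proof.
move=> N_hyp [n0 Nn0] z Nz z_unit.
exact/Nn0/(hyperideal_unit_full N_hyp Nz z_unit).
Qed.

Lemma nonunits_local : hyperideal hmul nonunits -> local_hyperring hmul.
Proof.
move=> M_hyp.
have one_unit : is_unit one by exists one; apply: hmul1.
have M_max : maximal_hyperideal hmul nonunits.
  split=> //; first by exists one.
  move=> J J_hyp MJ.
  case: (classic (exists u, J u /\ is_unit u)) => [[u [Ju u_unit]]|no_unit].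
    by right=> z; split=> // _; apply: (hyperideal_unit_full J_hyp Ju u_unit).
  left=> z; split; last exact: MJ.
  by move=> Jz z_unit; apply: no_unit; exists z.
exists nonunits; split=> // N [N_hyp N_proper N_max].
have NM := proper_hyperideal_nonunits N_hyp N_proper.
case: (N_max nonunits M_hyp NM) => [MN|Nfull]; first by move=> z; split=> /MN.
by case: (proj2 (Nfull one) Logic.I).
Qed.

Lemma hyperideal_opp (J : R -> Prop) a : hyperideal hmul J -> J a -> J (- a).
Proof.
move=> [[j0 Jj0] J_sub _ _] Ja.
have J0 : J 0 by rewrite -(subrr j0); apply: J_sub.
by rewrite -sub0r; apply: J_sub.
Qed.

Lemma hyperideal_add (J : R -> Prop) a b :
  hyperideal hmul J -> J a -> J b -> J (a + b).
Proof.
move=> J_hyp Ja Jb; have [_ J_sub _ _] := J_hyp.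
by rewrite -(opprK b); apply: J_sub => //; apply: hyperideal_opp.
Qed.

Lemma hprod_rcons r rs x :
  hprod hmul r (rcons rs x) = setmul hmul (hprod hmul r rs) (single x).
Proof. by rewrite /hprod -cats1 foldl_cat. Qed.

Section Annihilation.
Hypothesis hmul_total : forall a b, exists t, hmul a b t.
Hypothesis hmulDr : forall a b c,
  sub_set (hmul a (b + c)) (setadd (hmul a b) (hmul a c)).
Hypothesis hmulNr : forall a b, eq_set (hmul a (- b)) (hmul (- a) b).

Variables (I : R -> Prop) (x : R).
Hypothesis I_hyp : hyperideal hmul I.
Hypothesis x_notin_I : ~ I x.
Hypothesis x_nonunit : nonunits x.
Hypothesis nonunit_annihilates : forall a, nonunits a -> sub_set (hmul a x) I.

Let I_abs : forall r a, I a -> sub_set (hmul r a) I.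
Proof. by case: I_hyp. Qed.

Lemma annihilates_nonunit a : sub_set (hmul a x) I -> nonunits a.
Proof. by move=> axI a_unit; exact/x_notin_I/(absorbs_by_unit I_abs a_unit). Qed.

(* Negation preserves nonunits, since a o (-b) = (-a) o b. *)
Lemma nonunit_opp b : nonunits b -> nonunits (- b).
Proof.
move=> b_nonunit [v bv1]; apply: b_nonunit; exists (- v).
exact/(hmulNr b v one).
Qed.

Lemma nonunits_sub a b : nonunits a -> nonunits b -> nonunits (a - b).
Proof.
move=> a_nonunit b_nonunit; apply: annihilates_nonunit => w /hmulC w_in.
have [p [q [xap [xbq ->]]]] := hmulDr w_in.
apply: hyperideal_add => //.
- by apply: (nonunit_annihilates a_nonunit); apply/hmulC.
- by apply: (nonunit_annihilates (nonunit_opp b_nonunit)); apply/hmulC.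
Qed.

(* The C-condition for the nonunits, obtained from that of I by appending x. *)
Lemma nonunits_C_condition : C_condition hmul nonunits.
Proof.
move=> r rs [t [prod_t t_nonunit]] s prod_s.
have [w txw] := hmul_total t x.
have prod_xI : sub_set (hprod hmul r (rcons rs x)) I.
  case: I_hyp => _ _ _ IC; apply: IC; exists w; split.
    by rewrite hprod_rcons; exists t, x.
  exact: nonunit_annihilates t_nonunit w txw.
apply: annihilates_nonunit => w' sxw'.
by apply: prod_xI; rewrite hprod_rcons; exists s, x.
Qed.

Lemma nonunits_hyperideal : hyperideal hmul nonunits.
Proof.
split.
- by exists x.
- exact: nonunits_sub.
- by move=> r a a_nonunit t rat t_unit; exact/a_nonunit/(unit_factor_r rat t_unit).
- exact: nonunits_C_condition.
Qed.

End Annihilation.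

Lemma one_absorbing_annihilated (I : R -> Prop) :
  one_absorbing_prime hmul one I -> ~ prime_hyperideal hmul I ->
  exists x, [/\ ~ I x, nonunits x & forall a, nonunits a -> sub_set (hmul a x) I].
Proof.
move=> [I_hyp I_proper I_abs1] not_prime.
have I_abs : forall r a, I a -> sub_set (hmul r a) I by case: I_hyp.
have [x [y [xyI [xI yI]]]] : exists x y, sub_set (hmul x y) I /\ ~ I x /\ ~ I y.
  apply: NNPP => none; apply: not_prime; split=> // a b abI.
  apply: NNPP => neither; apply: none; exists a, b.
  by split=> //; split=> in_I; apply: neither; [left|right].
have yxI : sub_set (hmul y x) I by move=> w /hmulC; apply: xyI.
have x_nonunit : nonunits x by move=> x_unit; exact/yI/(absorbs_by_unit I_abs x_unit).
have y_nonunit : nonunits y by move=> y_unit; exact/xI/(absorbs_by_unit I_abs y_unit).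
exists x; split=> // a a_nonunit.
have axyI : sub_set (setmul hmul (hmul a x) (single y)) I.
  move=> t /hmul_reassoc [w [xyw awt]].
  exact: I_abs a w (xyI w xyw) t awt.
by case: (I_abs1 a x y a_nonunit x_nonunit y_nonunit axyI).
Qed.

End Hyperring.

Theorem mainTheorem3 (R : zmodType) (hmul : R -> R -> R -> Prop) (one : R)
  (HR : is_comm_mhyperring hmul one) (I : R -> Prop) :
  one_absorbing_prime hmul one I -> ~ prime_hyperideal hmul I ->
  local_hyperring hmul.
Proof.
case: HR => hmul_total hmulC [hmulA hmulDr] hmulN hmul1 I_1abs not_prime.
have [x [xI x_nonunit x_ann]] :=
  one_absorbing_annihilated hmulC hmulA hmul1 I_1abs not_prime.
have [I_hyp _ _] := I_1abs.
apply: (nonunits_local hmulC hmul1).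
exact: (nonunits_hyperideal hmulC hmulA hmul1 hmul_total hmulDr
          (fun a b => proj1 (hmulN a b)) I_hyp xI x_nonunit x_ann).
Qed.
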